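(* Let $p\ge 3$ be a prime and let $G$ be the Tanner graph of the array-based LDPC parity-check matrix $\mathbf{H}(3,p)$. Let $C_u$ be a set of $z$ check nodes with $1\le z\le p$, and let $W$ be the cluster-connecting set corresponding to $C_u$. Then: (a) $|W|\ge \dfrac{(1+2p)z-z^2}{4}$; (b) if all check nodes in $C_u$ belong to the same row group of $\mathbf{H}(3,p)$, then $|W|=zp$; (c) if $3\le z<p$ and every check node $c\in C_u$ lies on at least one cycle of length $6$ in $G$ whose other two check nodes also belong to $C_u$, then $|W|\le zp-z$.
   Context: For a prime $p$, let $\mathbf{I}$ be the $p\times p$ identity matrix and let $\sigma^{s}$ denote the $p\times p$ circulant permutation matrix obtained by cyclically left-shifting the entries of $\mathbf{I}$ by $s \pmod p$ positions ($\sigma^0=\mathbf{I}$). The array-based LDPC matrix $\mathbf{H}(3,p)$ is the $3p\times p^2$ binary block matrix whose $(r,t)$ block, $r\in\{0,1,2\}$, $t\in\{0,\dots,p-1\}$, is $\sigma^{rt}$. Its $r$-th block row (the $p$ rows of blocks $\sigma^{r\cdot 0},\dots,\sigma^{r(p-1)}$) is called row group $r$. Its Tanner graph $G=(V\cup C,E)$ is the bipartite graph with a variable node for each column, a check node for each row, and an edge for each entry equal to $1$. For $C_u\subseteq C$ let $\bar C_u=C\setminus C_u$, let $\mathcal{N}_V(C_u)$ be the set of variable nodes adjacent to some node of $C_u$, and for a variable node $x$ and $D\subseteq C$ let $\mathcal{N}_D(x)$ be the set of neighbors of $x$ in $D$. The cluster-connecting set (CCS) corresponding to $C_u$ is the set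 $W\subseteq \mathcal{N}_V(C_u)$ defined by: $x\in W$ if and only if $\mathcal{N}_{C_u}(x)\neq\emptyset$ and $\mathcal{N}_{\bar C_u}(x)\neq\emptyset$. *)

From mathcomp Require Import all_boot.
Set Implicit Arguments. Unset Strict Implicit. Unset Printing Implicit Defensive.

(* Check nodes: pairs (r, i) : 'I_3 * 'I_p  = row i of block row (row group) r,
                i.e. matrix row r*p + i.
   Variable nodes: pairs (t, j) : 'I_p * 'I_p = column j of block column t,
                i.e. matrix column t*p + j.
   Block (r,t) is sigma^(r t), where sigma^s is the identity cyclically
   left-shifted by s positions: row i has its 1 in column (i - s) mod p.
   Hence H[(r,i),(t,j)] = 1  iff  i = (j + r t) mod p. *)
Definition check_node (p : nat) := ('I_3 * 'I_p)%type.
Definition var_node (p : nat) := ('I_p * 'I_p)%type.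

Definition adj (p : nat) (c : 'I_3 * 'I_p) (x : 'I_p * 'I_p) : bool :=
  (c.2 : nat) == (x.2 + c.1 * x.1) %% p.

Definition CCS (p : nat) (Cu : {set 'I_3 * 'I_p}) : {set 'I_p * 'I_p} :=
  [set x | [exists c in Cu, adj c x] && [exists c in ~: Cu, adj c x]].

Definition on_6cycle_in (p : nat) (Cu : {set 'I_3 * 'I_p}) (c : 'I_3 * 'I_p) : Prop :=
  exists (c1 c2 : 'I_3 * 'I_p) (x0 x1 x2 : 'I_p * 'I_p),
    [/\ c1 \in Cu, c2 \in Cu,
        [&& c != c1, c != c2 & c1 != c2],
        [&& x0 != x1, x0 != x2 & x1 != x2] &
        [&& adj c x0, adj c1 x0, adj c1 x1, adj c2 x1, adj c2 x2 & adj c x2]].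

From mathcomp Require Import all_boot zify.
Set Implicit Arguments. Unset Strict Implicit. Unset Printing Implicit Defensive.

(* Write z = |Cu| and, for a variable node x, d(x) for the number of its
   neighbours in Cu.  Every variable node has exactly one neighbour in each of
   the three row groups, so x lies in the cluster-connecting set W iff
   0 < d(x) < 3.  The proof is double counting on the incidences between Cu and
   the variable nodes:
   - every check node has degree p, so  sum_x d(x) = z p;
   - for p prime, two distinct check nodes share at most one variable node (the
     Tanner graph has no 4-cycles), so  sum_x d(x)^2 <= z (p + z);
   - two distinct check nodes of the same row group share no variable node.
   Then (a) follows by summing 3d <= 2 [0 < d < 3] + d^2 (valid for d <= 3),
   (b) from d(x) <= 1 for all x, so that W is exactly {x | d(x) = 1}, and
   (c) by summing 2 [0 < d < 3] + d [1 < d] <= 2 d, together with the fact that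
   a check node on a 6-cycle inside Cu has two neighbours shared with Cu. *)

Lemma card_indicator (T : finType) (A : {set T}) : #|A| = \sum_x (x \in A : nat).
Proof. by rewrite -sum1_card big_mkcond; apply: eq_bigr => x _; case: (x \in A). Qed.

Lemma sum_indicator (T : finType) (P : pred T) : \sum_x (P x : nat) = #|[set x | P x]|.
Proof. by rewrite card_indicator; apply: eq_bigr => x _; rewrite inE. Qed.

Lemma mulIn_mod (p k a b : nat) : coprime p k -> a < p -> b < p ->
  k * a = k * b %[mod p] -> a = b.
Proof.
move=> co_pk; wlog le_ab : a b / a <= b => [wlog_ab lt_ap lt_bp eq_kab|lt_ap lt_bp].
  by case: (leqP a b) => [|/ltnW] ?; [exact: wlog_ab | apply/esym/wlog_ab].
move/esym/eqP; rewrite eqn_mod_dvd ?leq_mul2l ?le_ab ?orbT //.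
rewrite -mulnBr Gauss_dvdr // /dvdn modn_small => [/eqP|]; lia.
Qed.

Section TannerGraph.
Variable p : nat.
Implicit Types (c d : 'I_3 * 'I_p) (x y : 'I_p * 'I_p) (Cu : {set 'I_3 * 'I_p}).

Lemma adj_same_row c d x : adj c x -> adj d x -> c.1 = d.1 -> c = d.
Proof.
case: c d => r i [r' j]; rewrite /adj /= => /eqP eq_i /eqP eq_j eq_r; subst r'.
by congr pair; apply/val_inj => /=; rewrite eq_i eq_j.
Qed.

Lemma adj_same_block c x y : adj c x -> adj c y -> x.1 = y.1 -> x = y.
Proof.
case: x y => t j [t' j']; rewrite /adj /= => /eqP -> /eqP eq_c eq_t; subst t'.
move/eqP: eq_c; rewrite eqn_modDr !modn_small ?ltn_ord // => /eqP eq_j.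
by congr pair; apply: val_inj.
Qed.

(* Two check nodes of different row groups meet two common variable nodes
   only inside one block column: the shift difference is invertible mod p. *)
Lemma common_nbrs_same_block c d x y : prime p -> 3 <= p -> c.1 != d.1 ->
  adj c x -> adj d x -> adj c y -> adj d y -> x.1 = y.1.
Proof.
move=> p_prime p_ge3.
wlog lt_dc : c d / d.1 < c.1 => [wlog_cd|].
  move=> ne_cd cx dx cy dy; case: (ltngtP d.1 c.1) => [lt_dc|lt_cd|eq_cd].
  - exact: (wlog_cd c d).
  - by apply: (wlog_cd d c); rewrite // eq_sym.
  - by move: ne_cd; rewrite (val_inj eq_cd) eqxx.
case: c d lt_dc => r i [r' i'] /= lt_r' _.
rewrite /adj /= => /eqP eq_i /eqP eq_i' /eqP eq_iy /eqP eq_iy'.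
have shift_r : r = r' + (r - r') :> nat by lia.
have eq_r : (x.2 + r * x.1) %% p = (y.2 + r * y.1) %% p by rewrite -eq_i -eq_iy.
have eq_r' : (x.2 + r' * x.1) %% p = (y.2 + r' * y.1) %% p by rewrite -eq_i' -eq_iy'.
have eq_mul : (r - r') * x.1 = (r - r') * y.1 %[mod p].
  rewrite shift_r !mulnDl !addnA -modnDml eq_r' modnDml in eq_r.
  by apply/eqP; rewrite -(eqn_modDl (y.2 + r' * y.1)) eq_r.
apply: val_inj; apply: (mulIn_mod _ _ _ eq_mul) => //.
by rewrite prime_coprime // gtnNdvd //; have := ltn_ord r; lia.
Qed.

Lemma no_4cycle c d : prime p -> 3 <= p -> c != d ->
  #|[set x | adj c x && adj d x]| <= 1.
Proof.
move=> p_prime p_ge3 ne_cd; apply/card_le1_eqP => x y.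
rewrite !inE => /andP[cx dx] /andP[cy dy].
case: (eqVneq c.1 d.1) => [eq_row|ne_row].
  by move: ne_cd; rewrite (adj_same_row cx dx eq_row) eqxx.
by apply: (adj_same_block cy cx); apply: (common_nbrs_same_block p_prime p_ge3 ne_row).
Qed.

Definition nbrs x : {set 'I_3 * 'I_p} := [set c | adj c x].

(* Variable nodes have degree 3: one neighbour in each row group. *)
Lemma card_nbrs x : 0 < p -> #|nbrs x| = 3.
Proof.
move=> p_gt0.
pose nbr (r : 'I_3) : 'I_3 * 'I_p := (r, Ordinal (ltn_pmod (x.2 + r * x.1) p_gt0)).
have -> : nbrs x = [set nbr r | r in 'I_3].
  apply/setP => -[r i]; rewrite !inE; apply/idP/imsetP => [/eqP eq_i|[r' _ [-> ->]]].
    by exists r => //; congr pair; apply: val_inj.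
  by rewrite /adj.
by rewrite card_imset ?card_ord // => r r' [].
Qed.

(* Check nodes have degree p: one neighbour in each block column. *)
Lemma check_degree c : 0 < p -> \sum_x (adj c x : nat) = p.
Proof.
move=> p_gt0; rewrite -(pair_big xpredT xpredT (fun t j => (adj c (t, j) : nat))) /=.
rewrite -[RHS]muln1 -[p in p * 1]card_ord -sum_nat_const; apply: eq_bigr => t _.
pose shift (j : 'I_p) : 'I_p := Ordinal (ltn_pmod (j + c.1 * t) p_gt0).
have shift_inj : injective shift.
  by move=> j j' [] /eqP; rewrite eqn_modDr !modn_small ?ltn_ord // => /eqP /val_inj.
have -> : \sum_j (adj c (t, j) : nat) = #|shift @^-1: [set c.2]|.
  rewrite card_indicator; apply: eq_bigr => j _; rewrite !inE /adj /=.
  by rewrite eq_sym -val_eqE.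
by rewrite card_preimset ?cards1.
Qed.

Definition deg_in Cu x : nat := #|nbrs x :&: Cu|.

Lemma deg_in_le3 Cu x : 0 < p -> deg_in Cu x <= 3.
Proof. by move=> p_gt0; rewrite -(card_nbrs x p_gt0) subset_leq_card ?subsetIl. Qed.

Lemma deg_inE Cu x : deg_in Cu x = \sum_(c in Cu) (adj c x : nat).
Proof.
rewrite /deg_in card_indicator [RHS]big_mkcond /=; apply: eq_bigr => c _.
by rewrite !inE andbC; case: (c \in Cu).
Qed.

Lemma in_CCS Cu x : 0 < p -> (x \in CCS Cu) = (0 < deg_in Cu x < 3).
Proof.
move=> p_gt0.
have exists_nbr (S : {set 'I_3 * 'I_p}) : [exists c in S, adj c x] = (0 < #|nbrs x :&: S|).
  by apply/existsP/card_gt0P => -[c hc]; exists c; move: hc; rewrite !inE andbC.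
have out_Cu : #|nbrs x :&: ~: Cu| = 3 - deg_in Cu x.
  by have := cardsID Cu (nbrs x); rewrite card_nbrs // -setDE /deg_in; lia.
by rewrite inE !exists_nbr out_Cu subn_gt0.
Qed.

Lemma deg_in_shared Cu c d x : c \in Cu -> d \in Cu -> c != d ->
  adj c x -> adj d x -> 1 < deg_in Cu x.
Proof.
move=> cCu dCu ne_cd cx dx.
apply: (@leq_trans #|[set c; d]|); first by rewrite cards2 ne_cd.
by apply: subset_leq_card; apply/subsetP => e; rewrite !inE => /orP[]/eqP->; apply/andP.
Qed.

Lemma sum_deg_in_weighted Cu (f : 'I_p * 'I_p -> nat) :
  \sum_x deg_in Cu x * f x = \sum_(c in Cu) \sum_x adj c x * f x.
Proof.
under eq_bigr => x _ do rewrite deg_inE big_distrl /=.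
exact: exchange_big.
Qed.

Lemma sum_deg_in Cu : 0 < p -> \sum_x deg_in Cu x = #|Cu| * p.
Proof.
move=> p_gt0; under eq_bigr => x _ do rewrite -[deg_in Cu x]muln1.
rewrite sum_deg_in_weighted -sum_nat_const; apply: eq_bigr => c _.
by under eq_bigr => x _ do rewrite muln1; exact: check_degree.
Qed.

(* Second moment: the absence of 4-cycles bounds the pairs of incidences. *)
Lemma sum_deg_in_sq Cu : prime p -> 3 <= p ->
  \sum_x deg_in Cu x ^ 2 <= #|Cu| * (p + #|Cu|).
Proof.
move=> p_prime p_ge3; have p_gt0 := prime_gt0 p_prime.
under eq_bigr => x _ do rewrite -mulnn.
rewrite sum_deg_in_weighted -sum_nat_const; apply: leq_sum => c cCu.
under eq_bigr => x _ do rewrite deg_inE big_distrr /=.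
rewrite exchange_big (bigD1 c) //= leq_add //.
  by under eq_bigr => x _ do rewrite mulnb andbb; rewrite check_degree.
apply: (@leq_trans (\sum_(d in Cu | d != c) 1)).
  apply: leq_sum => d /andP[_ ne_dc]; under eq_bigr => x _ do rewrite mulnb.
  by rewrite sum_indicator no_4cycle // eq_sym.
by rewrite sum1dep_card subset_leq_card //; apply/subsetP => d; rewrite inE => /andP[].
Qed.

(* Part (a): 3d <= 2 [0 < d < 3] + d^2 for d <= 3, summed over the variable
   nodes and combined with the two moment computations. *)
Lemma CCS_lower_bound Cu : prime p -> 3 <= p -> #|Cu| <= p ->
  (1 + 2 * p) * #|Cu| <= 4 * #|CCS Cu| + #|Cu| ^ 2.
Proof.
move=> p_prime p_ge3 le_zp; have p_gt0 := prime_gt0 p_prime.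
have pointwise : 3 * \sum_x deg_in Cu x <=
    2 * \sum_x (x \in CCS Cu : nat) + \sum_x deg_in Cu x ^ 2.
  rewrite !big_distrr -big_split; apply: leq_sum => x _; rewrite in_CCS //.
  by have := deg_in_le3 Cu x p_gt0; case: (deg_in Cu x) => [|[|[|[|]]]].
rewrite -card_indicator sum_deg_in // in pointwise.
have := sum_deg_in_sq Cu p_prime p_ge3.
have : #|Cu| * #|Cu| <= #|Cu| * p by rewrite leq_mul2l le_zp orbT.
nia.
Qed.

(* Part (b): inside one row group, no variable node has two neighbours in Cu,
   so every incidence from Cu contributes a distinct node of W. *)
Lemma CCS_one_row_group Cu (r : 'I_3) : 0 < p ->
  (forall c, c \in Cu -> c.1 = r) -> #|CCS Cu| = #|Cu| * p.
Proof.
move=> p_gt0 row_r; rewrite card_indicator -sum_deg_in //.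
apply: eq_bigr => x _; rewrite in_CCS //.
have : deg_in Cu x <= 1.
  apply/card_le1_eqP => c d; rewrite !inE => /andP[cx cCu] /andP[dx dCu].
  by apply: (adj_same_row dx cx); rewrite !row_r.
by case: (deg_in Cu x) => [|[|]].
Qed.

(* A check node on a 6-cycle inside Cu has two distinct neighbours that are
   shared with other nodes of Cu. *)
Lemma shared_incidences Cu : (forall c, c \in Cu -> on_6cycle_in Cu c) ->
  2 * #|Cu| <= \sum_x deg_in Cu x * (1 < deg_in Cu x).
Proof.
move=> on_cycle; rewrite sum_deg_in_weighted mulnC -sum_nat_const.
apply: leq_sum => c cCu; under eq_bigr => x _ do rewrite mulnb.
have [c1 [c2 [x0 [x1 [x2 [c1Cu c2Cu /and3P[ne_c1 ne_c2 _] /and3P[_ ne_x02 _] adjs]]]]]]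
  := on_cycle c cCu.
case/and5P: adjs => cx0 c1x0 _ _ /andP[c2x2 cx2].
rewrite sum_indicator; apply: (@leq_trans #|[set x0; x2]|); first by rewrite cards2 ne_x02.
apply: subset_leq_card; apply/subsetP => x; rewrite !inE => /orP[]/eqP->.
  by rewrite cx0 (deg_in_shared cCu c1Cu).
by rewrite cx2 (deg_in_shared cCu c2Cu).
Qed.

(* Part (c): 2 [0 < d < 3] + d [1 < d] <= 2d for d <= 3, summed over the
   variable nodes. *)
Lemma CCS_upper_bound Cu : 0 < p -> (forall c, c \in Cu -> on_6cycle_in Cu c) ->
  #|CCS Cu| <= #|Cu| * p - #|Cu|.
Proof.
move=> p_gt0 on_cycle.
have pointwise : 2 * \sum_x (x \in CCS Cu : nat) +
    \sum_x deg_in Cu x * (1 < deg_in Cu x) <= 2 * \sum_x deg_in Cu x.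
  rewrite !big_distrr -big_split; apply: leq_sum => x _; rewrite in_CCS //.
  by have := deg_in_le3 Cu x p_gt0; case: (deg_in Cu x) => [|[|[|[|]]]].
have := shared_incidences on_cycle.
rewrite -card_indicator sum_deg_in // in pointwise; lia.
Qed.

End TannerGraph.

Theorem theorem2 (p : nat) (Cu : {set 'I_3 * 'I_p}) :
  prime p -> 3 <= p -> 1 <= #|Cu| <= p ->
  [/\ (* (a) |W| >= ((1+2p)z - z^2)/4 *)
      (1 + 2 * p) * #|Cu| <= 4 * #|CCS Cu| + #|Cu| ^ 2,
      (* (b) all of Cu in one row group => |W| = z p *)
      (exists r : 'I_3, forall c, c \in Cu -> c.1 = r) -> #|CCS Cu| = #|Cu| * p &
      (* (c) *)
      3 <= #|Cu| < p -> (forall c, c \in Cu -> on_6cycle_in Cu c) ->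
        #|CCS Cu| <= #|Cu| * p - #|Cu| ].
Proof.
move=> p_prime p_ge3 /andP[_ le_zp]; have p_gt0 := prime_gt0 p_prime.
split.
- exact: CCS_lower_bound.
- by case=> r; apply: CCS_one_row_group.
- by move=> _; apply: CCS_upper_bound.
Qed.
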